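(* Let $n\ge 3$, let $F\subseteq E(BH_n)$ with $|F|=4n-5$ and $\delta(BH_n-F)\ge 2$. Then at least one of the following holds: (1) there is an integer $m\in\{0,1,\dots,n-1\}$ such that $|F\cap\partial D_m|\ge 3$ and $\delta(BH_n-F-\partial D_m)\ge 2$; (2) there are two integers $m,m'\in\{0,1,\dots,n-1\}$ such that $|F\cap\partial D_m|\ge 2$ and $|F\cap\partial D_{m'}|\ge 2$, and moreover, for each $k\in\{m,m'\}$, the graph $BH_n-F-\partial D_k$ has no isolated vertex and at most one vertex of degree $1$.
   Context: The $n$-dimensional balanced hypercube $BH_n$ has vertex set $\{0,1,2,3\}^n$, vertices written $(a_0,a_1,\dots,a_{n-1})$. A vertex $(a_0,a_1,\dots,a_{n-1})$ is adjacent exactly to the $2n$ vertices $((a_0\pm 1)\bmod 4,a_1,\dots,a_{n-1})$ and $((a_0\pm1)\bmod 4,a_1,\dots,a_{i-1},(a_i+(-1)^{a_0})\bmod 4,a_{i+1},\dots,a_{n-1})$ for $1\le i\le n-1$. An edge $(u,v)$ is a $0$-dimension edge if $u,v$ differ only in the coordinate $a_0$; it is an $i$-dimension edge ($1\le i\le n-1$) if $u,v$ differ in the coordinates $a_0$ and $a_i$. $\partial D_d$ denotes the set of all $d$-dimension edges. For an edge set $S$, $BH_n-F-S$ is the graph on $V(BH_n)$ with edge set $E(BH_n)\setminus(F\cup S)$. *)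

From mathcomp Require Import all_boot.
Set Implicit Arguments. Unset Strict Implicit. Unset Printing Implicit Defensive.

(* Vertices of BH_n: functions 'I_n -> {0,1,2,3}; coordinate a_0 is the
   index with value 0. *)
Definition BHV (n : nat) := {ffun 'I_n -> 'I_4}.

(* The adjacency relation of BH_n, written as in the definition:
   v = ((a_0 +- 1) mod 4, a_1, ..., a_{n-1})  or
   v = ((a_0 +- 1) mod 4, ..., (a_i + (-1)^{a_0}) mod 4, ...) for 1<=i<=n-1. *)
Definition bh_adj (n : nat) (u v : BHV n) : bool :=
  [exists i0 : 'I_n, (val i0 == 0) &&
    (((val (v i0) == (val (u i0) + 1) %% 4) ||
      (val (v i0) == (val (u i0) + 3) %% 4)) &&
     ([forall j : 'I_n, (val j != 0) ==> (v j == u j)] ||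
      [exists i : 'I_n, (val i != 0) &&
         (val (v i) == (val (u i) + (if odd (val (u i0)) then 3 else 1)) %% 4) &&
         [forall j : 'I_n, ((val j != 0) && (j != i)) ==> (v j == u j)]]))].

Definition bh_edges (n : nat) : {set {set BHV n}} :=
  [set e | [exists u : BHV n, exists v : BHV n, bh_adj u v && (e == [set u; v])]].

Definition diffc (n : nat) (u v : BHV n) : {set 'I_n} := [set j | u j != v j].

(* \partial D_d : the set of all d-dimension edges.  A 0-dimension edge
   differs only in a_0; a d-dimension edge (1<=d) differs exactly in a_0, a_d. *)
Definition dimD (n : nat) (d : nat) : {set {set BHV n}} :=
  [set e in bh_edges n | [exists u : BHV n, exists v : BHV n,
     bh_adj u v && (e == [set u; v]) &&
     (diffc u v == [set j : 'I_n | (val j == 0) || (val j == d)])]].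

Definition deg_minus (n : nat) (S : {set {set BHV n}}) (v : BHV n) : nat :=
  #|[set u : BHV n | bh_adj v u && ([set v; u] \notin S)]|.

Definition mindeg_ge2 (n : nat) (S : {set {set BHV n}}) : Prop :=
  forall v : BHV n, 2 <= deg_minus S v.

Definition noiso_atmost1_deg1 (n : nat) (S : {set {set BHV n}}) : Prop :=
  (forall v : BHV n, 0 < deg_minus S v) /\
  #|[set v : BHV n | deg_minus S v == 1]| <= 1.

(* Every vertex lies on exactly two edges of each dimension, so in BH_n - F - \partial D_d the
   degree of v is 2n - 2 minus the number of faulty edges at v outside dimension d. Hence only
   "heavy" vertices, with at least 2n - 3 faulty edges, can violate the required degree bounds.
   BH_n is bipartite (the parity of a_0 alternates along edges), so a set of h vertices spans at
   most h^2/4 edges; double counting the faulty edges at the heavy vertices against |F| = 4n - 5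
   leaves at most three heavy vertices, and at most two when n >= 4.  With no heavy vertex, a
   dimension holding three faults (pigeonhole) satisfies (1).  With one or two heavy vertices,
   counting the dimensions in which they have both (resp. three of four) edges faulty yields a
   dimension for (1) or two dimensions for (2).  For n = 3 all configurations reduce to finitely
   many numerical profiles of the heavy vertices, which are checked by computation. *)

From mathcomp Require Import all_boot zify.
Set Implicit Arguments. Unset Strict Implicit. Unset Printing Implicit Defensive.

Lemma sum_nat_boolE (T : finType) (A : {pred T}) (P : pred T) :
  \sum_(x in A) P x = #|[set x in A | P x]|.
Proof.
rewrite -sum1_card [LHS]big_mkcond [RHS]big_mkcond; apply: eq_bigr => x _.
by rewrite inE; case: (x \in A); case: (P x).
Qed.

Lemma sum_le_card_top (I : finType) (A : {pred I}) (g : I -> nat) c :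
  (forall i, g i <= c.+1) -> \sum_(i in A) g i <= c * #|A| + #|[set i in A | g i == c.+1]|.
Proof.
move=> g_le; rewrite -sum_nat_boolE mulnC -sum_nat_const -big_split /=.
by apply: leq_sum => i _; have := g_le i; case: eqP => /=; lia.
Qed.

Definition rot4 (a : 'I_4) (k : nat) : 'I_4 := inord ((a + k) %% 4).

Lemma rot4E a k : rot4 a k = (a + k) %% 4 :> nat.
Proof. by rewrite inordK // ltn_pmod. Qed.

Lemma rot4_odd a b : odd (rot4 a (if b then 1 else 3)) = ~~ odd a.
Proof. by rewrite rot4E; case: a => -[|[|[|[|]]]] //; case: b. Qed.

(* [(-1)^a mod 4], the step of the coordinate [a_i] along an [i]-dimension edge. *)
Definition sign4 (a : 'I_4) : nat := if odd a then 3 else 1.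

Section BalancedHypercube.
Variable n : nat.
Local Notation N := n.+1.
Local Notation V := (BHV N).

Lemma eq_ord0 (j : 'I_N) : (j == ord0) = (val j == 0).
Proof. by []. Qed.

Definition bh_nb (v : V) (b : bool) (d : 'I_N) : V :=
  [ffun j => if j == ord0 then rot4 (v j) (if b then 1 else 3)
             else if j == d then rot4 (v j) (sign4 (v ord0)) else v j].

Lemma bh_nb0 v b d : bh_nb v b d ord0 = rot4 (v ord0) (if b then 1 else 3).
Proof. by rewrite ffunE eqxx. Qed.

Lemma odd_bh_nb v b d : odd (bh_nb v b d ord0) = ~~ odd (v ord0).
Proof. by rewrite bh_nb0 rot4_odd. Qed.

Lemma bh_nbK v b d : bh_nb (bh_nb v b d) (~~ b) d = v.
Proof.
apply/ffunP => j; rewrite ffunE bh_nb0 /sign4 rot4_odd ffunE; case: eqP => [-> | _].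
  by apply/val_inj; rewrite /= !rot4E; case: (v ord0) => -[|[|[|[|]]]] //; case: b.
case: eqP => // _; apply/val_inj; rewrite /= !rot4E.
by rewrite /sign4; case: (v j) => -[|[|[|[|]]]] //; case: odd.
Qed.

Lemma bh_adjP (u v : V) : reflect (exists b d, v = bh_nb u b d) (bh_adj u v).
Proof.
apply: (iffP existsP) => [[i0 /and3P [/eqP i00 step0 stepi]] | [b [d ->]]].
  have i0E : i0 = ord0 by apply/val_inj.
  subst i0.
  have [b v0] : exists b, v ord0 = rot4 (u ord0) (if b then 1 else 3).
    by case/orP: step0 => /eqP v0; [exists true | exists false]; apply/val_inj; rewrite /= rot4E.
  exists b.
  case/orP: stepi => [/forallP same | /existsP [i /andP [/andP [i_nz /eqP vi] /forallP same]]].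
    exists ord0; apply/ffunP => j; rewrite ffunE; case: eqP => [-> // | /eqP j_nz].
    by apply/eqP; have /= /implyP := same j; apply.
  exists i; apply/ffunP => j; rewrite ffunE; case: eqP => [-> // | /eqP j_nz].
  case: eqP => [-> | /eqP j_ni]; first by apply/val_inj; rewrite /= rot4E vi.
  by apply/eqP; have /= /implyP := same j; apply; rewrite j_nz j_ni.
exists ord0; rewrite /= bh_nb0 rot4E.
apply/andP; split; first by case: b; rewrite eqxx ?orbT.
case: (d =P ord0) => [-> | /eqP d_nz].
  apply/orP; left; apply/forallP => j; apply/implyP => j_nz.
  by rewrite ffunE eq_ord0 (negbTE j_nz).
apply/orP; right; apply/existsP; exists d.
rewrite -eq_ord0 d_nz ffunE (negbTE d_nz) eqxx /= rot4E /sign4 eqxx.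
apply/forallP => j; apply/implyP => /andP [j_nz j_nd].
by rewrite ffunE eq_ord0 (negbTE j_nz) (negbTE j_nd).
Qed.

Lemma bh_adj_nb v b d : bh_adj v (bh_nb v b d).
Proof. by apply/bh_adjP; exists b, d. Qed.

Lemma bh_adj_sym : symmetric (@bh_adj N).
Proof.
have imp (u v : V) : bh_adj u v -> bh_adj v u.
  by case/bh_adjP => b [d ->]; rewrite -{2}(bh_nbK u b d) bh_adj_nb.
by move=> u v; apply/idP/idP => /imp.
Qed.

Lemma bh_adj_odd (u v : V) : bh_adj u v -> odd (v ord0) = ~~ odd (u ord0).
Proof. by case/bh_adjP => b [d ->]; rewrite odd_bh_nb. Qed.

Lemma bh_adj_neq (u v : V) : bh_adj u v -> u != v.
Proof. by move/bh_adj_odd => odd_v; apply/eqP => uv; move: odd_v; rewrite uv; case: odd. Qed.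

Definition dim_coords (d : nat) : {set 'I_N} := [set j | (val j == 0) || (val j == d)].

Lemma diffc_bh_nb v b d : diffc v (bh_nb v b d) = dim_coords d.
Proof.
apply/setP => j; rewrite !inE ffunE -eq_ord0.
case: (j =P ord0) => [-> | _] /=.
  apply/eqP => /(congr1 (@nat_of_ord _)); rewrite rot4E.
  by case: (v ord0) => -[|[|[|[|]]]] //; case: b.
case: (j =P d) => [-> | jd]; last by rewrite eqxx; apply/esym/negbTE/eqP => /val_inj/jd.
rewrite eqxx /=.
apply/eqP => /(congr1 (@nat_of_ord _)); rewrite rot4E /sign4.
by case: (v d) => -[|[|[|[|]]]] //; case: odd.
Qed.

Lemma bh_edgeP (e : {set V}) :
  reflect (exists u v, bh_adj u v /\ e = [set u; v]) (e \in bh_edges N).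
Proof.
rewrite inE; apply: (iffP existsP) => [[u /existsP [v /andP [uv /eqP ->]]] | [u [v [uv ->]]]].
  by exists u, v.
by exists u; apply/existsP; exists v; rewrite uv eqxx.
Qed.

Lemma card_bh_edge e : e \in bh_edges N -> #|e| = 2.
Proof. by case/bh_edgeP => u [v [/bh_adj_neq uv ->]]; rewrite cards2 uv. Qed.

Lemma dim_coords_inj (d d' : 'I_N) : dim_coords d = dim_coords d' -> d = d'.
Proof.
move=> E.
have dd : d \in dim_coords d' by rewrite -E !inE eqxx orbT.
have dd' : d' \in dim_coords d by rewrite E !inE eqxx orbT.
move: dd dd'; rewrite !inE -!eq_ord0.
case: (d =P ord0) => [-> _ | _ /= /eqP /val_inj //].
by case/orP => /eqP; [move-> | move/val_inj].
Qed.

Lemma diffc_sym (u v : V) : diffc u v = diffc v u.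
Proof. by apply/setP => j; rewrite !inE eq_sym. Qed.

Lemma diffc_set2 (u v u' v' : V) :
  u' != v' -> [set u; v] = [set u'; v'] -> diffc u v = diffc u' v'.
Proof.
move=> neq E; have := set21 u' v'; have := set22 u' v'; rewrite -E !inE.
by case/orP => /eqP ?; case/orP => /eqP ?; subst; rewrite ?eqxx in neq; rewrite // diffc_sym.
Qed.

Lemma dimDP (d : 'I_N) (e : {set V}) :
  reflect (exists v b, e = [set v; bh_nb v b d]) (e \in dimD N d).
Proof.
apply: (iffP idP) => [| [v [b ->]]].
  rewrite inE => /andP [_ /existsP [u /existsP [w /andP [/andP [/bh_adjP [b [d' ->]] /eqP ->]]]]].
  by rewrite diffc_bh_nb -/(dim_coords d) => /eqP /dim_coords_inj <-; exists u, b.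
rewrite inE; apply/andP; split; first by apply/bh_edgeP; exists v, (bh_nb v b d); rewrite bh_adj_nb.
apply/existsP; exists v; apply/existsP; exists (bh_nb v b d).
by rewrite bh_adj_nb diffc_bh_nb !eqxx.
Qed.

Lemma dimD_inj (d d' : 'I_N) e : e \in dimD N d -> e \in dimD N d' -> d = d'.
Proof.
case/dimDP => v [b ->] /dimDP [v' [b' E]]; apply: dim_coords_inj.
rewrite -(diffc_bh_nb v b) -(diffc_bh_nb v' b'); apply: diffc_set2 E.
exact/bh_adj_neq/bh_adj_nb.
Qed.

Lemma bh_edge_dimD e : e \in bh_edges N -> exists d : 'I_N, e \in dimD N d.
Proof. by case/bh_edgeP => u [v [/bh_adjP [b [d ->]] ->]]; exists d; apply/dimDP; exists u, b. Qed.

Lemma card_dimD_partition (X : {set {set V}}) :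
  X \subset bh_edges N -> #|X| = \sum_(d < N) #|X :&: dimD N d|.
Proof.
move=> /subsetP X_edges.
have one_dim e : e \in X -> \sum_(d < N) (e \in dimD N d) = 1.
  move=> /X_edges /bh_edge_dimD [d ed]; rewrite (bigD1 d) //= ed big1 // => d' d'd.
  by case: (boolP (e \in dimD N d')) => // ed'; rewrite (dimD_inj ed ed') eqxx in d'd.
rewrite -sum1_card (eq_bigr _ (fun e ex => esym (one_dim e ex))) exchange_big /=.
by apply: eq_bigr => d _; rewrite sum_nat_boolE; congr #|_|; apply/setP => e; rewrite !inE.
Qed.

Definition star (v : V) : {set {set V}} := [set e in bh_edges N | v \in e].

Lemma star_dimD v (d : 'I_N) :
  star v :&: dimD N d = [set [set v; bh_nb v true d]; [set v; bh_nb v false d]].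
Proof.
apply/setP => e; rewrite in_setI in_set2 [e \in star v]inE.
apply/idP/idP => [/andP [/andP [_ ve] /dimDP [x [b ex]]] | e_nb].
  move: ve; rewrite {e}ex !inE => /orP [] /eqP ->; first by case: b; rewrite eqxx ?orbT.
  by case: b; rewrite bh_nbK setUC eqxx ?orbT.
have [b ->] : exists b, e = [set v; bh_nb v b d].
  by case/orP: e_nb => /eqP ->; [exists true | exists false].
rewrite set21 andbT; apply/andP; split; last by apply/dimDP; exists v, b.
by apply/bh_edgeP; exists v, (bh_nb v b d); rewrite bh_adj_nb.
Qed.

Lemma card_star_dimD v (d : 'I_N) : #|star v :&: dimD N d| = 2.
Proof.
rewrite star_dimD cards2.
suff -> : [set v; bh_nb v true d] != [set v; bh_nb v false d] by [].
apply/eqP =>  /(congr1 (fun e : {set V} => bh_nb v true d \in e)); rewrite !inE eqxx orbT.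
move/esym/orP => [] /eqP /(congr1 (fun w : V => nat_of_ord (w ord0))); rewrite !bh_nb0 !rot4E.
  by case: (v ord0) => -[|[|[|[|]]]].
by case: (v ord0) => -[|[|[|[|]]]].
Qed.

Lemma card_star v : #|star v| = 2 * N.
Proof.
rewrite card_dimD_partition; last by apply/subsetP => e; rewrite inE => /andP [].
rewrite (eq_bigr (fun _ => 2)) => [|d _]; last exact: card_star_dimD.
by rewrite sum_nat_const card_ord muln2 mul2n.
Qed.

Lemma deg_minusE (S : {set {set V}}) v : deg_minus S v = #|star v :\: S|.
Proof.
have inj : {in [set u | bh_adj v u] &, injective (fun u => [set v; u])}.
  move=> u u' vu _ E; rewrite inE in vu; have := set22 v u; rewrite E !inE.
  by case/orP => /eqP // uv; rewrite uv in vu; case/negP: (bh_adj_neq vu).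
have sub : {subset [set u | bh_adj v u && ([set v; u] \notin S)] <= [set u | bh_adj v u]}.
  by move=> u; rewrite !inE => /andP [].
rewrite /deg_minus -(card_in_imset (sub_in2 sub inj)).
apply: eq_card => e; rewrite [e \in star v :\: S]inE [e \in star v]inE.
apply/imsetP/idP => [[u] | ].
  by rewrite inE => /andP [vu eS] ->; rewrite eS set21 andbT; apply/bh_edgeP; exists v, u.
case/andP => eS /andP [/bh_edgeP [x [y [xy exy]]] ve].
have [u vu e_vu] : exists2 u, bh_adj v u & e = [set v; u].
  move: ve; rewrite exy !inE => /orP [] /eqP ->; first by exists y.
  by exists x; rewrite 1?setUC // bh_adj_sym.
by exists u; rewrite // inE vu -e_vu.
Qed.

Definition deg_in (X : {set {set V}}) v := #|X :&: star v|.

Lemma deg_minus_deg_in (S : {set {set V}}) v : deg_minus S v + deg_in S v = 2 * N.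
Proof. by rewrite deg_minusE /deg_in setIC addnC cardsID card_star. Qed.

Lemma deg_in_subset (X Y : {set {set V}}) v : X \subset Y -> deg_in X v <= deg_in Y v.
Proof. by move=> XY; apply/subset_leq_card/setSI. Qed.

Lemma deg_in_le_card (X : {set {set V}}) v : deg_in X v <= #|X|.
Proof. exact/subset_leq_card/subsetIl. Qed.

Lemma deg_in_dimD (v : V) (d : 'I_N) : deg_in (dimD N d) v = 2.
Proof. by rewrite /deg_in setIC card_star_dimD. Qed.

Lemma deg_in_dimD_le2 (X : {set {set V}}) v (d : 'I_N) : deg_in (X :&: dimD N d) v <= 2.
Proof. by apply: leq_trans (deg_in_subset v (subsetIr X _)) _; rewrite deg_in_dimD. Qed.

Lemma deg_in_partition (X : {set {set V}}) v :
  X \subset bh_edges N -> deg_in X v = \sum_(d < N) deg_in (X :&: dimD N d) v.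
Proof.
move=> sX; rewrite /deg_in card_dimD_partition ?subIset ?sX //.
by apply: eq_bigr => d _; rewrite setIAC.
Qed.

Lemma deg_minus_setUD (F : {set {set V}}) v (d : 'I_N) :
  deg_minus (F :|: dimD N d) v = 2 * N - 2 - (deg_in F v - deg_in (F :&: dimD N d) v).
Proof.
have := deg_minus_deg_in (F :|: dimD N d) v.
have := cardsUI (F :&: star v) (dimD N d :&: star v).
rewrite -setIUl setIACA setIid -!/(deg_in _ v) deg_in_dimD.
have := deg_in_subset v (subsetIl F (dimD N d)); have := deg_in_dimD_le2 F v d; lia.
Qed.

Lemma sum_deg_in (X : {set {set V}}) (S : {set V}) :
  X \subset bh_edges N -> \sum_(v in S) deg_in X v = \sum_(e in X) #|e :&: S|.
Proof.
move=> /subsetP X_edges.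
rewrite (eq_bigr (fun v => \sum_(e in X) (v \in e))) => [|v _]; last first.
  rewrite sum_nat_boolE; apply: eq_card => e; rewrite in_setI [RHS]inE.
  by case: (boolP (e \in X)) => //= /X_edges eE; rewrite in_set eE.
rewrite exchange_big; apply: eq_bigr => e _; rewrite sum_nat_boolE.
by apply: eq_card => v; rewrite !inE andbC.
Qed.

Lemma card_bh_edge_meet e (S : {set V}) : e \in bh_edges N ->
  #|e :&: S| <= 1 + (e \subset S) /\ 2 * (e \subset S) <= #|e :&: S|.
Proof.
move=> /card_bh_edge e2; case: (boolP (e \subset S)) => eS; first by rewrite (setIidPl eS) e2.
suff : #|e :&: S| < #|e| by rewrite e2; lia.
apply: proper_card; rewrite properEneq subsetIl andbT.
by apply: contra eS => /eqP <-; exact: subsetIr.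
Qed.

Lemma sum_deg_in_le (X : {set {set V}}) (S : {set V}) : X \subset bh_edges N ->
  \sum_(v in S) deg_in X v <= #|X| + #|[set e in X | e \subset S]|.
Proof.
move=> sX; rewrite sum_deg_in // -sum_nat_boolE -sum1_card -big_split /=.
by apply: leq_sum => e /(subsetP sX) /(@card_bh_edge_meet _ S) [].
Qed.

Lemma sum_deg_in_ge (X : {set {set V}}) (S : {set V}) : X \subset bh_edges N ->
  2 * #|[set e in X | e \subset S]| <= \sum_(v in S) deg_in X v.
Proof.
move=> sX; rewrite sum_deg_in // -sum_nat_boolE big_distrr /=.
by apply: leq_sum => e /(subsetP sX) /(@card_bh_edge_meet _ S) [].
Qed.

Lemma card_bh_edges_within (S : {set V}) :
  4 * #|[set e in bh_edges N | e \subset S]| <= #|S| ^ 2.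
Proof.
set O := [set v : V | odd (v ord0)].
have within : #|[set e in bh_edges N | e \subset S]| <= #|S :&: O| * #|S :\: O|.
  rewrite -cardsX; apply: leq_trans (leq_imset_card (fun x => [set x.1; x.2]) _).
  apply/subset_leq_card/subsetP => e; rewrite inE => /andP [/bh_edgeP [u [w [uw ->]]] uwS].
  have [uS wS] : u \in S /\ w \in S by split; apply: (subsetP uwS); rewrite !inE eqxx ?orbT.
  have odd_w := bh_adj_odd uw; apply/imsetP.
  case: (boolP (odd (u ord0))) => uO.
    by exists (u, w); rewrite // in_setX !inE uS wS odd_w uO.
  by exists (w, u); [rewrite in_setX !inE uS wS odd_w uO | exact: setUC].
rewrite -(cardsID O S); apply: leq_trans (nat_AGM2 _ _); by rewrite leq_mul2l.
Qed.

Definition strong_dim (F : {set {set V}}) (m : nat) :=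
  3 <= #|F :&: dimD N m| /\ mindeg_ge2 (F :|: dimD N m).

Definition weak_dim (F : {set {set V}}) (k : nat) :=
  2 <= #|F :&: dimD N k| /\ noiso_atmost1_deg1 (F :|: dimD N k).

Definition good_dims (F : {set {set V}}) :=
  (exists m : 'I_N, strong_dim F m) \/
  (exists k k' : 'I_N, [/\ k != k', weak_dim F k & weak_dim F k']).

Definition heavy_set (F : {set {set V}}) := [set v | 2 * N - 3 <= deg_in F v].

Lemma strong_dim_heavy (F : {set {set V}}) (m : 'I_N) : 0 < n -> 3 <= #|F :&: dimD N m| ->
  {in heavy_set F, forall v, deg_in F v - deg_in (F :&: dimD N m) v <= 2 * N - 4} ->
  strong_dim F m.
Proof.
move=> n_gt0 cm heavy_ok; split=> [// | v]; rewrite deg_minus_setUD.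
case: (boolP (v \in heavy_set F)) => [/heavy_ok | ]; rewrite ?inE; lia.
Qed.

Lemma weak_dim_heavy (F : {set {set V}}) (k : 'I_N) : 0 < n -> 2 <= #|F :&: dimD N k| ->
  {in heavy_set F, forall v, deg_in F v - deg_in (F :&: dimD N k) v <= 2 * N - 3} ->
  #|[set v in heavy_set F | deg_in F v - deg_in (F :&: dimD N k) v == 2 * N - 3]| <= 1 ->
  weak_dim F k.
Proof.
move=> n_gt0 ck heavy_ok deg1; split; first exact: ck.
have out_le v : deg_in F v - deg_in (F :&: dimD N k) v <= 2 * N - 3.
  by case: (boolP (v \in heavy_set F)) => [/heavy_ok | ]; rewrite ?inE; lia.
split=> [v | ]; first by rewrite deg_minus_setUD; have := out_le v; lia.
apply: leq_trans deg1; apply/subset_leq_card/subsetP => v; rewrite !inE deg_minus_setUD.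
by have := out_le v; lia.
Qed.

Lemma weak_dim_heavy_except (F : {set {set V}}) (k : 'I_N) (z : V) :
  0 < n -> 2 <= #|F :&: dimD N k| ->
  {in heavy_set F, forall v, deg_in F v - deg_in (F :&: dimD N k) v <= 2 * N - 3} ->
  {in heavy_set F, forall v, v != z -> deg_in F v - deg_in (F :&: dimD N k) v <= 2 * N - 4} ->
  weak_dim F k.
Proof.
move=> n_gt0 ck heavy_ok heavy_strict; apply: (weak_dim_heavy n_gt0 ck heavy_ok).
apply: (@leq_trans #|[set z]|); last by rewrite cards1.
apply/subset_leq_card/subsetP => v /setIdP [vH]; rewrite in_set1.
by apply: contraTT => vz; have := heavy_strict v vH vz; lia.
Qed.

Lemma mindeg_ge2_deg_in (F : {set {set V}}) v : mindeg_ge2 F -> deg_in F v <= 2 * N - 2.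
Proof. by move=> /(_ v); have := deg_minus_deg_in F v; lia. Qed.

Lemma exists_dimD_ge3 (F : {set {set V}}) : F \subset bh_edges N -> 2 * N < #|F| ->
  exists m : 'I_N, 3 <= #|F :&: dimD N m|.
Proof.
move=> sF; case: (pickP (fun m : 'I_N => 3 <= #|F :&: dimD N m|)) => [m | small]; first by exists m.
rewrite card_dimD_partition // ltnNge => /negP []; apply: (@leq_trans (\sum_(d < N) 2)).
  by apply: leq_sum => d _; have := small d; rewrite /= ltnNge => /negbT; rewrite negbK.
by rewrite sum_nat_const card_ord mulnC.
Qed.

Lemma card_heavy_lt (F : {set {set V}}) k : F \subset bh_edges N ->
  k ^ 2 + 4 * #|F| < 4 * (k * (2 * N - 3)) -> #|heavy_set F| < k.
Proof.
move=> sF ineq; rewrite ltnNge; apply/negP => /card_geqP [s [s_uniq s_size s_heavy]].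
set S := [set v in s].
have cardS : #|S| = k by rewrite cardsE (card_uniqP s_uniq).
have lower : k * (2 * N - 3) <= \sum_(v in S) deg_in F v.
  rewrite -cardS -sum_nat_const; apply: leq_sum => v; rewrite inE => /s_heavy.
  by rewrite inE.
have within : [set e in F | e \subset S] \subset [set e in bh_edges N | e \subset S].
  by apply/subsetP => e /setIdP [/(subsetP sF) eE eS]; apply/setIdP.
move: ineq; rewrite ltnNge => /negP; apply; rewrite addnC.
apply: (@leq_trans (4 * (#|F| + #|[set e in bh_edges N | e \subset S]|))).
  rewrite leq_mul2l /= (leq_trans lower) // (leq_trans (sum_deg_in_le S sF)) //.
  by rewrite leq_add2l subset_leq_card.
by rewrite mulnDr leq_add2l -cardS card_bh_edges_within.
Qed.

Section FaultSet.
Variable F : {set {set V}}.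
Hypotheses (n_gt1 : 1 < n) (F_edges : F \subset bh_edges N) (card_F : #|F| = 4 * N - 5).
Hypothesis F_mindeg : mindeg_ge2 F.

Lemma F_dimD_ge3 : exists m : 'I_N, 3 <= #|F :&: dimD N m|.
Proof. by apply: exists_dimD_ge3 F_edges _; rewrite card_F; lia. Qed.

Lemma good_dims_no_heavy : heavy_set F = set0 -> good_dims F.
Proof.
move=> no_heavy; have [m cm] := F_dimD_ge3.
by left; exists m; apply: strong_dim_heavy => [| // | v]; rewrite ?no_heavy ?inE //; lia.
Qed.

Lemma good_dims_one_heavy v : heavy_set F = [set v] -> good_dims F.
Proof.
move=> heavy_v; have [m cm] := F_dimD_ge3.
have n_gt0 : 0 < n by lia.
have only_v (P : V -> Prop) : P v -> {in heavy_set F, forall x, P x}.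
  by move=> Pv x; rewrite heavy_v inE => /eqP ->.
have fv := mindeg_ge2_deg_in v F_mindeg.
case: (leqP (deg_in F v - deg_in (F :&: dimD N m) v) (2 * N - 4)) => out_m.
  by left; exists m; apply: (strong_dim_heavy n_gt0 cm); apply: only_v.
set T := [set d in [set~ m] | deg_in (F :&: dimD N d) v == 2].
have T_good k : k \in T -> weak_dim F k.
  move=> /setIdP [_ /eqP fdk]; apply: (weak_dim_heavy_except (z := v) n_gt0).
  - by apply: leq_trans (deg_in_le_card _ v); rewrite fdk.
  - by apply: only_v; lia.
  - by apply: only_v => /eqP.
have out_sum : deg_in F v - deg_in (F :&: dimD N m) v =
               \sum_(d in [set~ m]) deg_in (F :&: dimD N d) v.
  rewrite (deg_in_partition v F_edges) (bigD1 m) //= addKn.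
  by apply: eq_bigl => d; rewrite !inE.
have T_large : deg_in F v - deg_in (F :&: dimD N m) v <= n + #|T|.
  have := sum_le_card_top [set~ m] (c := 1) (fun d => deg_in_dimD_le2 F v d).
  by rewrite -out_sum cardsC1 card_ord mul1n => le; exact: le.
case: (ltnP (deg_in F v - deg_in (F :&: dimD N m) v) (2 * N - 2)) => out_m'.
  have /card_gt0P [k kT] : 0 < #|T| by lia.
  right; exists m, k; split; last exact: T_good.
    by move: kT; rewrite !inE eq_sym => /andP [].
  apply: (weak_dim_heavy_except (z := v) n_gt0); first lia.
    by apply: only_v; move: out_m'; set o := deg_in F v - _; lia.
  by apply: only_v => /eqP.
have /card_gt1P [k [k' [kT k'T kk']]] : 1 < #|T| by lia.
by right; exists k, k'; split; [| exact: T_good..].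
Qed.

Lemma good_dims_two_heavy u w : 2 < n -> u != w -> heavy_set F = [set u; w] -> good_dims F.
Proof.
move=> n_gt2 uw heavy_uw; have n_gt0 : 0 < n by lia.
have only_uw (P : V -> Prop) : P u -> P w -> {in heavy_set F, forall x, P x}.
  by move=> Pu Pw x; rewrite heavy_uw !inE => /orP [] /eqP ->.
have [uH wH] : u \in heavy_set F /\ w \in heavy_set F by rewrite heavy_uw !inE !eqxx orbT.
rewrite !inE in uH wH.
have fu := mindeg_ge2_deg_in u F_mindeg; have fw := mindeg_ge2_deg_in w F_mindeg.
have shared (d : 'I_N) :
    deg_in (F :&: dimD N d) u + deg_in (F :&: dimD N d) w <= #|F :&: dimD N d| + 1.
  have Fd_edges : F :&: dimD N d \subset bh_edges N by rewrite subIset ?F_edges.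
  have := sum_deg_in_le [set u; w] Fd_edges.
  rewrite big_setU1 ?inE // big_set1 => /leq_trans; apply.
  rewrite leq_add2l; apply: (@leq_trans #|[set e in bh_edges N | e \subset [set u; w]]|).
    apply/subset_leq_card/subsetP => e /setIdP [/setIP [/(subsetP F_edges) eE _] eS].
    exact/setIdP.
  rewrite -(@leq_pmul2l 4) // muln1.
  by apply: leq_trans (card_bh_edges_within _) _; rewrite cards2 uw.
case: (pickP (fun d : 'I_N => (deg_in (F :&: dimD N d) u == 2) && (deg_in (F :&: dimD N d) w == 2)))
  => [m /andP [/eqP fum /eqP fwm] | not_both].
  left; exists m; apply: (strong_dim_heavy n_gt0); first by have := shared m; lia.
  by apply: only_uw; lia.
set T := [set d : 'I_N | deg_in (F :&: dimD N d) u + deg_in (F :&: dimD N d) w == 3].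
have T_good k : k \in T -> weak_dim F k.
  rewrite inE => /eqP fk3; have := shared k.
  have := deg_in_dimD_le2 F u k; have := deg_in_dimD_le2 F w k => fuk fwk ck.
  pose z := if deg_in (F :&: dimD N k) u == 2 then w else u.
  apply: (weak_dim_heavy_except (z := z) n_gt0); first lia.
    by apply: only_uw; lia.
  by apply: only_uw; rewrite /z; case: ifP => /eqP fuk2; rewrite ?eqxx // => _; lia.
have T_large : deg_in F u + deg_in F w <= 2 * N + #|T|.
  have le3 (d : 'I_N) : deg_in (F :&: dimD N d) u + deg_in (F :&: dimD N d) w <= 3.
    have := not_both d; have := deg_in_dimD_le2 F u d; have := deg_in_dimD_le2 F w d.
    by rewrite /=; case: eqP; case: eqP => /=; lia.
  have := sum_le_card_top [set: 'I_N] (c := 2) le3.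
  rewrite cardsT card_ord (eq_bigl xpredT) => [|d]; last by rewrite in_setT.
  by rewrite big_split /= -!deg_in_partition // setIdE setTI => le; exact: le.
have /card_gt1P [k [k' [kT k'T kk']]] : 1 < #|T| by lia.
by right; exists k, k'; split; [| exact: T_good..].
Qed.

End FaultSet.

End BalancedHypercube.

Lemma count_enum_set (T : finType) (A : {set T}) (P : pred T) :
  count P (enum A) = #|[set x in A | P x]|.
Proof. by rewrite -sum_nat_boolE -big_enum /= -sum1_count big_mkcond. Qed.

Fixpoint lists_over (T : Type) (A : seq T) (k : nat) : seq (seq T) :=
  if k is k'.+1 then [seq x :: xs | x <- A, xs <- lists_over A k'] else [:: [::]].

Lemma mem_lists_over (T : eqType) (A : seq T) xs :
  {subset xs <= A} -> xs \in lists_over A (size xs).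
Proof.
elim: xs => [|x xs IH] // xsA; apply/allpairsP; exists (x, xs); split=> //.
  by apply: xsA; rewrite mem_head.
by apply: IH => y y_xs; apply: xsA; rewrite in_cons y_xs orbT.
Qed.

Definition faults_outside (p : seq nat) (k : nat) := sumn p - nth 0 p k.

Definition column (ps : seq (seq nat)) (d : nat) := sumn [seq nth 0 p d | p <- ps].

Definition admissible_within (ps : seq (seq nat)) (s : seq nat) :=
  (4 * sumn s <= size ps ^ 2) && all (fun d => 2 * nth 0 s d <= column ps d) (iota 0 3).

Definition admissible_counts (ps : seq (seq nat)) (s c : seq nat) :=
  all (fun d => column ps d <= nth 0 c d + nth 0 s d) (iota 0 3).

Definition strong_dim_num ps c m := (3 <= nth 0 c m) && all (fun p => faults_outside p m <= 2) ps.

Definition weak_dim_num ps c k :=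
  [&& 2 <= nth 0 c k, all (fun p => faults_outside p k <= 3) ps
    & count (fun p => faults_outside p k == 3) ps <= 1].

Definition good_dims_num ps c :=
  has (strong_dim_num ps c) (iota 0 3) ||
  has (fun k => has (fun k' => [&& k != k', weak_dim_num ps c k & weak_dim_num ps c k']) (iota 0 3))
      (iota 0 3).

Definition profiles := [seq p <- lists_over (iota 0 3) 3 | 3 <= sumn p <= 4].

Definition within_vectors := [seq s <- lists_over (iota 0 3) 3 | sumn s <= 2].

Definition count_vectors := [seq c <- lists_over (iota 0 8) 3 | sumn c == 7].

(* For n = 3, a heavy vertex has 3 or 4 faulty edges, at most 2 per dimension; [ps] lists their
   profiles (faults per dimension), [s] the numbers of faulty edges joining two heavy vertices and
   [c] the numbers of faulty edges, per dimension.  Every admissible triple passes the numerical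
   form of the conclusion. *)
Lemma dim3_configurations :
  all (fun h => all (fun ps =>
      all (fun s => all (good_dims_num ps) [seq c <- count_vectors | admissible_counts ps s c])
          [seq s <- within_vectors | admissible_within ps s])
    (lists_over profiles h)) (iota 0 4).
Proof. by vm_compute. Qed.

Section DimensionThree.
Variable F : {set {set BHV 3}}.
Hypotheses (F_edges : F \subset bh_edges 3) (card_F : #|F| = 7) (F_mindeg : mindeg_ge2 F).

Local Notation H := (heavy_set F).

Definition profile (v : BHV 3) := [seq deg_in (F :&: dimD 3 d) v | d <- iota 0 3].

Lemma nth_profile v k : k < 3 -> nth 0 (profile v) k = deg_in (F :&: dimD 3 k) v.
Proof. by move=> k3; rewrite (nth_map 0) ?size_iota ?nth_iota. Qed.

Lemma sumn_profile v : sumn (profile v) = deg_in F v.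
Proof.
by rewrite sumnE big_map -[iota 0 3]/(index_iota 0 3) big_mkord (deg_in_partition v F_edges).
Qed.

Lemma out_profile v k : k < 3 ->
  faults_outside (profile v) k = deg_in F v - deg_in (F :&: dimD 3 k) v.
Proof. by move=> k3; rewrite /faults_outside sumn_profile nth_profile. Qed.

Lemma profile_in v : v \in H -> profile v \in profiles.
Proof.
rewrite inE => vH; have vF := mindeg_ge2_deg_in v F_mindeg.
rewrite mem_filter sumn_profile; apply/andP; split; first by apply/andP; split; lia.
have := @mem_lists_over _ (iota 0 3) (profile v); rewrite size_map size_iota; apply.
move=> x /mapP [d]; rewrite mem_iota => /andP [_ d3] ->.
by rewrite mem_iota leq0n add0n ltnS (deg_in_dimD_le2 F v (Ordinal d3)).
Qed.

Definition heavy_profiles := [seq profile v | v <- enum H].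

Lemma all_heavy_profiles (P : pred (seq nat)) :
  all P heavy_profiles = [forall v in H, P (profile v)].
Proof.
rewrite all_map; apply/allP/forall_inP => [Pv v vH | Pv v]; last by rewrite mem_enum => /Pv.
by apply: Pv; rewrite mem_enum.
Qed.

Lemma size_heavy_profiles : size heavy_profiles = #|H|.
Proof. by rewrite size_map cardE. Qed.

Lemma heavy_profiles_in : heavy_profiles \in lists_over profiles (size heavy_profiles).
Proof.
by apply: mem_lists_over => p /mapP [v]; rewrite mem_enum => vH ->; exact: profile_in.
Qed.

Lemma column_heavy_profiles d : d < 3 ->
  column heavy_profiles d = \sum_(v in H) deg_in (F :&: dimD 3 d) v.
Proof.
move=> d3; rewrite /column -map_comp sumnE big_map big_enum.
by apply: eq_bigr => v _; rewrite /= nth_profile.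
Qed.

Lemma card_heavy_le3 : #|H| <= 3.
Proof. by apply: (card_heavy_lt (k := 4) F_edges); rewrite card_F. Qed.

Definition heavy_edges := [set e in F | e \subset H].

Lemma heavy_edges_dimD d : [set e in F :&: dimD 3 d | e \subset H] = heavy_edges :&: dimD 3 d.
Proof. by rewrite /heavy_edges !setIdE setIAC. Qed.

Lemma heavy_edges_sub : heavy_edges \subset bh_edges 3.
Proof. by apply/subsetP => e /setIdP [/(subsetP F_edges)]. Qed.

Lemma card_heavy_edges : 4 * #|heavy_edges| <= #|H| ^ 2.
Proof.
apply: leq_trans (card_bh_edges_within H); rewrite leq_mul2l; apply/subset_leq_card/subsetP.
by move=> e /setIdP [/(subsetP F_edges) eE eH]; apply/setIdP.
Qed.

Definition within_counts := [seq #|heavy_edges :&: dimD 3 d| | d <- iota 0 3].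

Definition dim_counts := [seq #|F :&: dimD 3 d| | d <- iota 0 3].

Lemma nth_counts (f : nat -> nat) k : k < 3 -> nth 0 [seq f d | d <- iota 0 3] k = f k.
Proof. by move=> k3; rewrite (nth_map 0) ?size_iota ?nth_iota. Qed.

Lemma sumn_counts (X : {set {set BHV 3}}) : X \subset bh_edges 3 ->
  sumn [seq #|X :&: dimD 3 d| | d <- iota 0 3] = #|X|.
Proof.
by move=> sX; rewrite sumnE big_map -[iota 0 3]/(index_iota 0 3) big_mkord (card_dimD_partition sX).
Qed.

Lemma counts_in (X : {set {set BHV 3}}) k : #|X| < k ->
  [seq #|X :&: dimD 3 d| | d <- iota 0 3] \in lists_over (iota 0 k) 3.
Proof.
move=> Xk; have := @mem_lists_over _ (iota 0 k) [seq #|X :&: dimD 3 d| | d <- iota 0 3].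
rewrite size_map size_iota; apply => x /mapP [d _ ->]; rewrite mem_iota leq0n add0n.
by apply: leq_ltn_trans Xk; apply/subset_leq_card/subsetIl.
Qed.

Lemma within_counts_in : within_counts \in within_vectors.
Proof.
have small : #|heavy_edges| <= 2.
  have := card_heavy_edges; have := card_heavy_le3; rewrite -(leq_exp2r _ _ (isT : 0 < 2)).
  rewrite -[3 ^ 2]/9; lia.
by rewrite mem_filter sumn_counts ?heavy_edges_sub // small counts_in.
Qed.

Lemma dim_counts_in : dim_counts \in count_vectors.
Proof. by rewrite mem_filter sumn_counts // card_F eqxx counts_in ?card_F. Qed.

Lemma within_admissible : admissible_within heavy_profiles within_counts.
Proof.
rewrite /admissible_within sumn_counts ?heavy_edges_sub // size_heavy_profiles card_heavy_edges.
apply/allP => d; rewrite mem_iota leq0n add0n => d3.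
rewrite nth_counts // column_heavy_profiles // -heavy_edges_dimD.
by apply: sum_deg_in_ge; rewrite subIset ?F_edges.
Qed.

Lemma dim_admissible : admissible_counts heavy_profiles within_counts dim_counts.
Proof.
apply/allP => d; rewrite mem_iota leq0n add0n => d3.
rewrite !nth_counts // column_heavy_profiles // -heavy_edges_dimD.
by apply: sum_deg_in_le; rewrite subIset ?F_edges.
Qed.

Lemma strong_dim_of_num m : m < 3 -> strong_dim_num heavy_profiles dim_counts m -> strong_dim F m.
Proof.
move=> m3 /andP [cm outs]; rewrite nth_counts // in cm.
apply: (strong_dim_heavy (m := Ordinal m3) (isT : 0 < 2) cm) => v vH.
by move: outs; rewrite all_heavy_profiles => /forall_inP /(_ v vH); rewrite out_profile.
Qed.

Lemma weak_dim_of_num k : k < 3 -> weak_dim_num heavy_profiles dim_counts k -> weak_dim F k.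
Proof.
move=> k3 /and3P [ck outs cnt]; rewrite nth_counts // in ck.
apply: (weak_dim_heavy (k := Ordinal k3) (isT : 0 < 2) ck) => [v vH | ].
  by move: outs; rewrite all_heavy_profiles => /forall_inP /(_ v vH); rewrite out_profile.
apply: leq_trans cnt; rewrite count_map count_enum_set.
apply/subset_leq_card/subsetP => v /setIdP [vH vk]; apply/setIdP; split; first exact: vH.
by rewrite -[preim _ _ v]/(faults_outside (profile v) k == 3) out_profile.
Qed.

Lemma good_dims_dim3 : good_dims F.
Proof.
have h_in : size heavy_profiles \in iota 0 4.
  by rewrite mem_iota leq0n add0n ltnS size_heavy_profiles card_heavy_le3.
have w_in : within_counts \in [seq s <- within_vectors | admissible_within heavy_profiles s].
  by rewrite mem_filter within_admissible within_counts_in.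
have c_in :
    dim_counts \in [seq c <- count_vectors | admissible_counts heavy_profiles within_counts c].
  by rewrite mem_filter dim_admissible dim_counts_in.
have := allP (allP (allP (allP dim3_configurations _ h_in) _ heavy_profiles_in) _ w_in) _ c_in.
case/orP => [/hasP [m] | /hasP [k kI /hasP [k' k'I /and3P [kk' gk gk']]]].
  rewrite mem_iota leq0n add0n => m3 g1; left; exists (Ordinal m3); exact: strong_dim_of_num.
move: kI k'I; rewrite !mem_iota !leq0n !add0n => k3 k'3; right.
by exists (Ordinal k3), (Ordinal k'3); split; [exact: kk' | exact: weak_dim_of_num ..].
Qed.

End DimensionThree.

Theorem lemma6 (n : nat) (F : {set {set BHV n}}) :
  3 <= n ->
  F \subset bh_edges n ->
  #|F| = 4 * n - 5 ->
  mindeg_ge2 F ->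
  (exists m : nat, m < n /\ 3 <= #|F :&: dimD n m| /\ mindeg_ge2 (F :|: dimD n m))
  \/
  (exists m m' : nat, m < n /\ m' < n /\ m <> m' /\
     2 <= #|F :&: dimD n m| /\ 2 <= #|F :&: dimD n m'| /\
     noiso_atmost1_deg1 (F :|: dimD n m) /\ noiso_atmost1_deg1 (F :|: dimD n m')).
Proof.
case: n F => [|n] // F n_ge3 F_edges card_F F_mindeg.
suff [[m [cm gm]] | [k [k' [kk' [ck gk] [ck' gk']]]]] : good_dims F.
- by left; exists m.
- by right; exists k, k'; do !split=> //; apply/eqP; rewrite -val_eqE in kk'.
have n_gt1 : 1 < n by [].
have [n2 | n_ne2] := eqVneq n 2; first by subst n; exact: good_dims_dim3 F_edges card_F F_mindeg.
have n_gt2 : 2 < n by rewrite ltn_neqAle eq_sym n_ne2.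
have heavy_lt3 : #|heavy_set F| < 3 by apply: card_heavy_lt F_edges _; rewrite card_F; lia.
have [/eqP heavy0 | heavy_gt0] := posnP #|heavy_set F|.
  by apply: good_dims_no_heavy n_gt1 F_edges card_F _; apply/eqP; rewrite -cards_eq0.
have [heavy_gt1 | heavy_le1] := ltnP 1 #|heavy_set F|.
  have /cards2P [u [w [uw heavy_uw]]] : #|heavy_set F| == 2 by rewrite eqn_leq -ltnS heavy_lt3.
  exact: good_dims_two_heavy n_gt1 F_edges card_F F_mindeg _ _ n_gt2 uw heavy_uw.
have /cards1P [v heavy_v] : #|heavy_set F| == 1 by rewrite eqn_leq heavy_le1.
exact: good_dims_one_heavy n_gt1 F_edges card_F F_mindeg _ heavy_v.
Qed.
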